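(* Let $A$ be an absolute-valued algebra with left unit $e$, whose norm comes from the inner product $\langle\cdot|\cdot\rangle$, and assume $x^2e=x^2$ for all $x\in A$. Then (1) $(x^2)^2=-\|x\|^4e+2\langle e|x^2\rangle x^2$ for all $x\in A$; (2) $x^2(xe)=\|x\|^2x+2\langle e|x^2\rangle xe$ for all $x\in A$ orthogonal to $e$.
   Context: An absolute-valued algebra is a nonzero real algebra with a norm satisfying $\|xy\|=\|x\|\|y\|$; when it has a left unit $e$ ($ex=x$ for all $x$), its norm is induced by an inner product $\langle\cdot|\cdot\rangle$ with $\|x\|^2=\langle x|x\rangle$. *)

From HB Require Import structures.
From mathcomp Require Import all_boot all_order all_algebra.
From mathcomp Require Import reals.
Set Implicit Arguments. Unset Strict Implicit. Unset Printing Implicit Defensive.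
Import Order.TTheory GRing.Theory Num.Theory.
Local Open Scope ring_scope.

Definition bilinear_mul (R : realType) (V : lmodType R) (mul : V -> V -> V) : Prop :=
  (forall (a : R) (x y z : V), mul (a *: x + y) z = a *: mul x z + mul y z) /\
  (forall (a : R) (x y z : V), mul x (a *: y + z) = a *: mul x y + mul x z).

Definition inner_product (R : realType) (V : lmodType R) (ip : V -> V -> R) : Prop :=
  (forall x y : V, ip x y = ip y x) /\
  (forall (a : R) (x y z : V), ip (a *: x + y) z = a * ip x z + ip y z) /\
  (forall x : V, 0 <= ip x x) /\
  (forall x : V, ip x x = 0 -> x = 0).

Definition ipnorm (R : realType) (V : lmodType R) (ip : V -> V -> R) (x : V) : R :=
  Num.sqrt (ip x x).

Definition absolute_valued (R : realType) (V : lmodType R) (mul : V -> V -> V)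
  (ip : V -> V -> R) : Prop :=
  bilinear_mul mul /\ inner_product ip /\ (exists x : V, x <> 0) /\
  (forall x y : V, ipnorm ip (mul x y) = ipnorm ip x * ipnorm ip y).

Definition left_unit (R : realType) (V : lmodType R) (mul : V -> V -> V) (e : V) : Prop :=
  forall x : V, mul e x = x.

From HB Require Import structures.
From mathcomp Require Import all_boot all_order all_algebra.
From mathcomp Require Import reals.
From mathcomp Require Import lra.
Set Implicit Arguments. Unset Strict Implicit. Unset Printing Implicit Defensive.
Import Order.TTheory GRing.Theory Num.Theory.
Local Open Scope ring_scope.

(* Polarizing [|ax|^2 = |a|^2 |x|^2] in both factors and using the left unit
   shows that the adjoint of left multiplication [L_a] is [2<a|e> - L_a].
   Hence [L_a^2 - 2<a|e> L_a + |a|^2 = 0], together with its polarization in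
   [a].  Applied to [a = x^2, y = e] (where [x^2 e = x^2]) this is (1); the
   polarized identity for [a = x^2, b = x, y = e] gives (2), because the
   adjoint identity with [a = x = y] turns [<e|x> = 0] into [<x^2|x> = 0]. *)

Section InnerProduct.
Variables (R : realType) (V : lmodType R) (ip : V -> V -> R).
Hypothesis hip : inner_product ip.

Lemma ipC x y : ip x y = ip y x.
Proof. by case: hip. Qed.

Lemma ip_linearl a x y z : ip (a *: x + y) z = a * ip x z + ip y z.
Proof. by case: hip => _ []. Qed.

Lemma ip0l z : ip 0 z = 0.
Proof. by have := ip_linearl 1 0 0 z; rewrite scaler0 addr0 mul1r; lra. Qed.

Lemma ipDl x y z : ip (x + y) z = ip x z + ip y z.
Proof. by have := ip_linearl 1 x y z; rewrite scale1r mul1r. Qed.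

Lemma ipZl a x z : ip (a *: x) z = a * ip x z.
Proof. by rewrite -[_ *: _]addr0 ip_linearl ip0l addr0. Qed.

Lemma ipBl x y z : ip (x - y) z = ip x z - ip y z.
Proof. by rewrite ipDl -scaleN1r ipZl mulN1r. Qed.

Lemma ipDr x y z : ip z (x + y) = ip z x + ip z y.
Proof. by rewrite ipC ipDl -!(ipC z). Qed.

Lemma ip_ge0 x : 0 <= ip x x.
Proof. by case: hip => _ [_ []]. Qed.

Lemma ip_ext u w : (forall z, ip u z = ip w z) -> u = w.
Proof.
move=> ipuw; apply/eqP; rewrite -subr_eq0; apply/eqP.
by case: hip => _ [_ [_ ip_def]]; apply: ip_def; rewrite ipBl ipuw subrr.
Qed.

Lemma sqr_ipnorm x : ipnorm ip x ^+ 2 = ip x x.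
Proof. by rewrite /ipnorm sqr_sqrtr ?ip_ge0. Qed.

End InnerProduct.

Section AbsoluteValuedAlgebra.
Variables (R : realType) (V : lmodType R) (mul : V -> V -> V).
Variables (ip : V -> V -> R) (e : V).
Hypothesis hmul : bilinear_mul mul.
Hypothesis hip : inner_product ip.
Hypothesis hnorm : forall x y, ipnorm ip (mul x y) = ipnorm ip x * ipnorm ip y.
Hypothesis he : left_unit mul e.

Let ipC := ipC hip.
Let ipDl := ipDl hip.
Let ipDr := ipDr hip.
Let ipZl := ipZl hip.
Let ipBl := ipBl hip.

Lemma amulDl x y z : mul (x + y) z = mul x z + mul y z.
Proof. by case: hmul => bl _; have := bl 1 x y z; rewrite !scale1r. Qed.

Lemma amulDr x y z : mul z (x + y) = mul z x + mul z y.
Proof. by case: hmul => _ br; have := br 1 z x y; rewrite !scale1r. Qed.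

Lemma ip_mul_sqr x y : ip (mul x y) (mul x y) = ip x x * ip y y.
Proof. by rewrite -!(sqr_ipnorm hip) hnorm exprMn. Qed.

Lemma ip_mul2l a x y : ip (mul a x) (mul a y) = ip a a * ip x y.
Proof.
have := ip_mul_sqr a (x + y).
by rewrite amulDr !ipDl !ipDr !ip_mul_sqr (ipC (mul a y)) (ipC y x); lra.
Qed.

Lemma ip_mul_cross a b x y :
  ip (mul a x) (mul b y) + ip (mul b x) (mul a y) = 2 * ip a b * ip x y.
Proof.
have := ip_mul2l (a + b) x y.
by rewrite !amulDl !ipDl !ipDr !ip_mul2l (ipC b a); lra.
Qed.

Lemma ip_mul_adj a x y : ip (mul a x) y + ip x (mul a y) = 2 * ip a e * ip x y.
Proof. by have := ip_mul_cross a e x y; rewrite !he. Qed.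

Lemma lmul_quadratic a y :
  mul a (mul a y) = (2 * ip a e) *: mul a y - ip a a *: y.
Proof.
apply: (ip_ext hip) => z.
by have := ip_mul_adj a (mul a y) z; rewrite ip_mul2l ipBl !ipZl; lra.
Qed.

Lemma lmul_quadratic_polar a b y :
  mul a (mul b y) + mul b (mul a y)
  = (2 * ip a e) *: mul b y + (2 * ip b e) *: mul a y - (2 * ip a b) *: y.
Proof.
apply: (ip_ext hip) => z.
have := ip_mul_adj a (mul b y) z; have := ip_mul_adj b (mul a y) z.
have := ip_mul_cross a b y z.
rewrite ipBl !ipDl !ipZl (ipC (mul a y) (mul b z)) (ipC (mul b y) (mul a z)).
lra.
Qed.

Lemma ip_sqr_orth x : ip e x = 0 -> ip (mul x x) x = 0.
Proof.
by move=> xe0; have := ip_mul_adj x x x; rewrite (ipC x e) xe0 (ipC x); lra.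
Qed.

End AbsoluteValuedAlgebra.

Theorem lemma5 (R : realType) (V : lmodType R) (mul : V -> V -> V)
  (ip : V -> V -> R) (e : V)
  (hA : absolute_valued mul ip) (he : left_unit mul e)
  (hsq : forall x : V, mul (mul x x) e = mul x x) :
  (forall x : V,
     mul (mul x x) (mul x x)
     = - (ipnorm ip x ^+ 4) *: e + (2 * ip e (mul x x)) *: mul x x) /\
  (forall x : V, ip e x = 0 ->
     mul (mul x x) (mul x e)
     = (ipnorm ip x ^+ 2) *: x + (2 * ip e (mul x x)) *: mul x e).
Proof.
case: hA => [hmul [hip [_ hnorm]]].
have ipC := ipC hip.
split=> [x|x xe0].
  have := lmul_quadratic hmul hip hnorm he (mul x x) e; rewrite hsq => ->.
  by rewrite ip_mul_sqr // -(sqr_ipnorm hip x) -exprD (ipC e) addrC scaleNr.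
have := lmul_quadratic_polar hmul hip hnorm he (mul x x) x e.
rewrite hsq (lmul_quadratic hmul hip hnorm he) (ipC x e) xe0.
rewrite (ip_sqr_orth hmul hip hnorm he xe0).
rewrite (sqr_ipnorm hip) (ipC e) !(mulr0, scale0r, subr0, addr0, sub0r) => <-.
by rewrite addrC subrK.
Qed.
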